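(* Let $R$ be a commutative ring, $N=\mathrm{N}_3(R)$, $J\subseteq N$ the ideal of matrices with zero diagonal, and $T=N/J$. Let $\alpha,\beta\in H^1(N,T)$ be the classes of the derivations $N\to T$ sending $\begin{pmatrix}a&b&c\\0&a&d\\0&0&a\end{pmatrix}$ to $b\,e$ and to $d\,e$ respectively, where $e\in T$ is the image of $I_3$. Then $H^*(N,T)$, with the cup product, is a graded associative $R$-algebra, and the induced map $R\langle\alpha,\beta\rangle/(\alpha\beta)\to H^*(N,T)$ is an isomorphism of graded $R$-algebras, where $R\langle\alpha,\beta\rangle$ is the free associative algebra on $\alpha,\beta$ in degree $1$ and $(\alpha\beta)$ the two-sided ideal generated by $\alpha\beta$. In particular $H^m(N,T)$ is free with basis $\{\beta^i\alpha^j\mid i,j\ge0,\ i+j=m\}$.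
   Context: $\mathrm{N}_3(R)=\left\{\begin{pmatrix}a&b&c\\0&a&d\\0&0&a\end{pmatrix}\mid a,b,c,d\in R\right\}$. $T=N/J\cong R$ is an $N$-bimodule on which a matrix acts on either side by multiplication by its diagonal entry $a$; $T\otimes_NT\cong T$, so the cup product $H^p(N,T)\otimes H^q(N,T)\to H^{p+q}(N,T\otimes_NT)\cong H^{p+q}(N,T)$, $(f\cup g)(a_1,\dots,a_{p+q})=f(a_1,\dots,a_p)\otimes g(a_{p+1},\dots,a_{p+q})$ on Hochschild cochains, makes $H^*(N,T)$ a graded associative algebra. *)

From HB Require Import structures.
From mathcomp Require Import all_boot all_order all_algebra.
Set Implicit Arguments. Unset Strict Implicit. Unset Printing Implicit Defensive.
Import Order.TTheory GRing.Theory Num.Theory.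
Local Open Scope ring_scope.

Section N3Coh.
Variable R : comPzRingType.

Definition i0 : 'I_3 := @Ordinal 3 0 isT.
Definition i1 : 'I_3 := @Ordinal 3 1 isT.
Definition i2 : 'I_3 := @Ordinal 3 2 isT.

Definition inN3 (M : 'M[R]_3) : bool :=
  [&& M i1 i1 == M i0 i0, M i2 i2 == M i0 i0,
      M i1 i0 == 0, M i2 i0 == 0 & M i2 i1 == 0].

(* the image in T = N/J ~ R : the common diagonal entry a *)
Definition diagN (M : 'M[R]_3) : R := M i0 i0.

Definition Nseq (n : nat) (s : seq 'M[R]_3) : Prop := size s = n /\ all inN3 s.

(* a (T-valued) n-cochain is represented by a function on sequences; only its
   values on length-n sequences of elements of N matter *)
Definition cochainT := seq 'M[R]_3 -> R.

Definition multilinear (n : nat) (f : cochainT) : Prop :=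
  forall (k : nat) (s : seq 'M[R]_3) (x y : 'M[R]_3) (r : R),
    (k < n)%N -> Nseq n s -> inN3 x -> inN3 y ->
    f (set_nth 0 s k (r *: x + y)) = r * f (set_nth 0 s k x) + f (set_nth 0 s k y).

Definition cochain (n : nat) (f : cochainT) : Prop := multilinear n f.

(* (a_1,...,a_{n+1}) |-> (a_1,...,a_i a_{i+1},...,a_{n+1}),  i counted from 0 *)
Definition mulat (i : nat) (s : seq 'M[R]_3) : seq 'M[R]_3 :=
  take i s ++ (nth 0 s i *m nth 0 s i.+1) :: drop i.+2 s.

Definition hoch_d (n : nat) (f : cochainT) : cochainT :=
  fun s => diagN (nth 0 s 0) * f (behead s)
         + \sum_(i < n) (-1) ^+ i.+1 * f (mulat i s)
         + (-1) ^+ n.+1 * f (take n s) * diagN (nth 0 s n).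

Definition cocycle (n : nat) (f : cochainT) : Prop :=
  cochain n f /\ forall s, Nseq n.+1 s -> hoch_d n f s = 0.

Definition coboundary (n : nat) (f : cochainT) : Prop :=
  match n with
  | 0%N => forall s, Nseq 0 s -> f s = 0
  | n'.+1 => exists g, cochain n' g /\ forall s, Nseq n s -> f s = hoch_d n' g s
  end.

Definition cup (p : nat) (f g : cochainT) : cochainT :=
  fun s => f (take p s) * g (drop p s).

Definition one_cochain : cochainT := fun _ => 1.

(* the derivations  M |-> b e  and  M |-> d e  (e |-> 1 under T ~ R) *)
Definition alphaC : cochainT := fun s => (nth 0 s 0) i0 i1.
Definition betaC : cochainT := fun s => (nth 0 s 0) i1 i2.

(* words in the free algebra R<alpha,beta>: true = alpha, false = beta;
   the image of a word is the iterated cup product of its letters *)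
Definition letterC (b : bool) : cochainT := if b then alphaC else betaC.
Definition wordC (w : seq bool) : cochainT :=
  foldr (fun b acc => cup 1 (letterC b) acc) one_cochain w.

(* the degree-m map R<alpha,beta>_m -> C^m, coefficients on words of length m *)
Definition PhiC (m : nat) (c : m.-tuple bool -> R) : cochainT :=
  fun s => \sum_(w : m.-tuple bool) c w * wordC w s.

(* degree-m component of the two-sided ideal (alpha beta): R-span of the
   words u alpha beta v *)
Definition in_ideal_ab (m : nat) (c : m.-tuple bool -> R) : Prop :=
  forall w : m.-tuple bool, c w != 0 -> infix [:: true; false] (tval w).

Definition ba_word (i j : nat) : seq bool := nseq i false ++ nseq j true.

End N3Coh.

(* Proof outline.
   - Cochains: multilinearity is preserved by sums, scalars, cup products and
     contraction of the first argument with an element of N; the Leibniz rule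
     d(f u g) = df u g + (-1)^p f u dg makes cup products descend to
     cohomology, and the cup product is associative on the nose.
   - Degree one: alpha, beta are cocycles and d gamma = - alpha u beta for
     gamma = the (1,3) entry of the first argument; hence every word
     containing alpha beta is exact, and Phi kills the ideal (alpha beta).
   - Injectivity: on the test sequence (Y^i, X^j) (Y = E_23, X = E_12) every
     coboundary vanishes, while the word beta^i alpha^j is the only word not
     vanishing there; a coefficient function with exact image therefore lies
     in the ideal.
   - Surjectivity, by induction on the degree: expanding an (m+1)-cocycle f
     along its first argument gives f ~ alpha u A + gamma u K + beta u B with
     K, B cocycles and dA = - beta u K; left multiplication by beta being
     injective on H^m, K is exact and gamma u K can be absorbed.
   - The basis beta^i alpha^(m-i) then follows from both directions. *)

From HB Require Import structures.
From mathcomp Require Import all_boot all_order all_algebra ring.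
Import Order.TTheory GRing.Theory Num.Theory.
Local Open Scope ring_scope.

Section SetNth.
Set Implicit Arguments.
Variables (T : Type) (x0 : T).
Implicit Types (s : seq T) (k p : nat) (v : T).

Lemma set_nth_same s k : (k < size s)%N -> set_nth x0 s k (nth x0 s k) = s.
Proof. by elim: s k => [|x s IH] [|k] //= Hk; rewrite IH. Qed.

Lemma take_set_nth_lt s p k v : (k < p)%N -> (k < size s)%N ->
  take p (set_nth x0 s k v) = set_nth x0 (take p s) k v.
Proof. by elim: p s k => [|p IH] [|x s] [|k] //= Hk Hs; rewrite IH. Qed.

Lemma drop_set_nth_lt s p k v : (k < p)%N -> (k < size s)%N ->
  drop p (set_nth x0 s k v) = drop p s.
Proof. by elim: p s k => [|p IH] [|x s] [|k] //= Hk Hs; rewrite IH. Qed.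

Lemma take_set_nth_ge s p k v : (p <= k)%N -> (k < size s)%N ->
  take p (set_nth x0 s k v) = take p s.
Proof.
elim: p s k => [|p IH] s k; first by rewrite !take0.
by case: s k => [|x s] [|k] //= Hk Hs; rewrite IH.
Qed.

Lemma drop_set_nth_ge s p k v : (p <= k)%N -> (k < size s)%N ->
  drop p (set_nth x0 s k v) = set_nth x0 (drop p s) (k - p) v.
Proof.
elim: p s k => [|p IH] s k; first by rewrite !drop0 subn0.
by case: s k => [|x s] [|k] //= Hk Hs; rewrite IH.
Qed.

End SetNth.

Section N3Cohomology.
Set Implicit Arguments. Unset Strict Implicit. Unset Printing Implicit Defensive.
Variable R : comPzRingType.
Local Notation M := 'M[R]_3.
Implicit Types (x y : M) (s t : seq M).

Lemma ord3_cases (i : 'I_3) : i = i0 \/ i = i1 \/ i = i2.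
Proof.
case: i => [[|[|[|k]]] Hk] //.
- by left; apply: val_inj.
- by right; left; apply: val_inj.
- by right; right; apply: val_inj.
Qed.

Lemma mul3E x y i j : (x *m y) i j = x i i0 * y i0 j + x i i1 * y i1 j + x i i2 * y i2 j.
Proof.
rewrite mxE !big_ord_recl big_ord0 addr0 addrA.
by congr (_ * _ + _ * _ + _ * _); congr (_ _ _); apply: val_inj.
Qed.

Local Ltac entrywise :=
  apply/matrixP => i j; have [->|[->|->]] := ord3_cases i; have [->|[->|->]] := ord3_cases j.

Lemma inN3P x : inN3 x ->
  [/\ x i1 i1 = x i0 i0, x i2 i2 = x i0 i0, x i1 i0 = 0, x i2 i0 = 0 & x i2 i1 = 0].
Proof. by case/and5P=> /eqP ? /eqP ? /eqP ? /eqP ? /eqP ?. Qed.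

Definition mI : M := 1%:M.
Definition mX : M := delta_mx i0 i1.
Definition mY : M := delta_mx i1 i2.
Definition mZ : M := delta_mx i0 i2.

Lemma inN3_0 : inN3 (0 : M). Proof. by apply/and5P; split; rewrite !mxE. Qed.
Lemma inN3_I : inN3 mI. Proof. by apply/and5P; split; rewrite !mxE. Qed.
Lemma inN3_X : inN3 mX. Proof. by apply/and5P; split; rewrite !mxE. Qed.
Lemma inN3_Y : inN3 mY. Proof. by apply/and5P; split; rewrite !mxE. Qed.
Lemma inN3_Z : inN3 mZ. Proof. by apply/and5P; split; rewrite !mxE. Qed.

Lemma inN3_lin (r : R) x y : inN3 x -> inN3 y -> inN3 (r *: x + y).
Proof.
move/inN3P=> [h1 h2 h3 h4 h5] /inN3P [g1 g2 g3 g4 g5].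
by apply/and5P; split; apply/eqP; rewrite !mxE ?h1 ?h2 ?h3 ?h4 ?h5 ?g1 ?g2 ?g3 ?g4 ?g5 //; ring.
Qed.

Lemma inN3_scale (r : R) x : inN3 x -> inN3 (r *: x).
Proof. by move=> Hx; rewrite -[_ *: x]addr0 inN3_lin ?inN3_0. Qed.

Lemma inN3_mul x y : inN3 x -> inN3 y -> inN3 (x *m y).
Proof.
move/inN3P=> [h1 h2 h3 h4 h5] /inN3P [g1 g2 g3 g4 g5].
by apply/and5P; split; apply/eqP; rewrite !mul3E ?h1 ?h2 ?h3 ?h4 ?h5 ?g1 ?g2 ?g3 ?g4 ?g5 //; ring.
Qed.

Lemma N3_decomp x : inN3 x ->
  x = x i0 i0 *: mI + (x i0 i1 *: mX + (x i0 i2 *: mZ + x i1 i2 *: mY)).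
Proof.
by move/inN3P=> [h1 h2 h3 h4 h5]; entrywise; rewrite !mxE /= ?h1 ?h2 ?h3 ?h4 ?h5; ring.
Qed.

Lemma mulXN x : inN3 x -> mX *m x = x i0 i0 *: mX + x i1 i2 *: mZ.
Proof.
by move/inN3P=> [h1 h2 h3 h4 h5]; entrywise; rewrite !mul3E !mxE /= ?h1 ?h2 ?h3 ?h4 ?h5; ring.
Qed.

Lemma mulZN x : inN3 x -> mZ *m x = x i0 i0 *: mZ.
Proof.
by move/inN3P=> [h1 h2 h3 h4 h5]; entrywise; rewrite !mul3E !mxE /= ?h1 ?h2 ?h3 ?h4 ?h5; ring.
Qed.

Lemma mulYN x : inN3 x -> mY *m x = x i0 i0 *: mY.
Proof.
by move/inN3P=> [h1 h2 h3 h4 h5]; entrywise; rewrite !mul3E !mxE /= ?h1 ?h2 ?h3 ?h4 ?h5; ring.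
Qed.

Lemma mulYY : mY *m mY = 0. Proof. by entrywise; rewrite !mul3E !mxE /=; ring. Qed.
Lemma mulYX : mY *m mX = 0. Proof. by entrywise; rewrite !mul3E !mxE /=; ring. Qed.
Lemma mulXX : mX *m mX = 0. Proof. by entrywise; rewrite !mul3E !mxE /=; ring. Qed.

Lemma Nseq_cons n x s : inN3 x -> Nseq n s -> Nseq n.+1 (x :: s).
Proof. by rewrite /Nseq /= => -> [-> ->]. Qed.

Lemma Nseq_cons_inv n s : Nseq n.+1 s ->
  exists x t, [/\ s = x :: t, inN3 x & Nseq n t].
Proof. by case: s => [[]//|x t] [[Ht] /andP [Hx Ha]]; exists x, t. Qed.

Lemma Nseq_take p n s : (p <= n)%N -> Nseq n s -> Nseq p (take p s).
Proof.
move=> Hp [Hs Ha]; split; first by rewrite size_takel // Hs.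
by move: Ha; rewrite -{1}(cat_take_drop p s) all_cat => /andP [].
Qed.

Lemma Nseq_drop p n s : Nseq (p + n) s -> Nseq n (drop p s).
Proof.
move=> [Hs Ha]; split; first by rewrite size_drop Hs addKn.
by move: Ha; rewrite -{1}(cat_take_drop p s) all_cat => /andP [].
Qed.

Lemma Nseq_mulat n i s : (i < n)%N -> Nseq n.+1 s -> Nseq n (mulat i s).
Proof.
elim: i n s => [|i IH] [|n] s // Hi /Nseq_cons_inv [x [t [-> Hx Ht]]].
  have [y [u [-> Hy Hu]]] := Nseq_cons_inv Ht.
  by rewrite /mulat /= drop0; apply: Nseq_cons => //; apply: inN3_mul.
by rewrite /mulat /=; apply: Nseq_cons => //; apply: IH.
Qed.

Lemma mulatS i x s : mulat i.+1 (x :: s) = x :: mulat i s.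
Proof. by []. Qed.

Lemma nth_mulat s k : (k <= size s)%N ->
  nth 0 (mulat k s) k = nth 0 s k *m nth 0 s k.+1.
Proof. by move=> Hk; rewrite /mulat nth_cat size_takel // ltnn subnn. Qed.

Lemma take_mulat_lt s i p : (i < p)%N -> take p (mulat i s) = mulat i (take p.+1 s).
Proof.
elim: i p s => [|i IH] [|p] s //= Hip.
  by case: s => [|x [|y t]]; rewrite /mulat /= ?take0 ?drop0.
by case: s => [|x s] //; rewrite !mulatS /= IH.
Qed.

Lemma drop_mulat_lt s i p : (i < p)%N -> drop p (mulat i s) = drop p.+1 s.
Proof.
elim: i p s => [|i IH] [|p] s //= Hip.
  by case: s => [|x [|y t]]; rewrite /mulat /= ?take0 ?drop0.
by case: s => [|x s] //; rewrite mulatS /= IH.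
Qed.

Lemma take_mulat_ge s j p : (p <= size s)%N -> take p (mulat (p + j) s) = take p s.
Proof.
elim: p s => [|p IH] s; first by rewrite !take0.
by case: s => [|x s] // Hp; rewrite addSn mulatS /= IH.
Qed.

Lemma drop_mulat_ge s j p : (p <= size s)%N -> drop p (mulat (p + j) s) = mulat j (drop p s).
Proof.
elim: p s => [|p IH] s; first by rewrite !drop0 add0n.
by case: s => [|x s] // Hp; rewrite addSn mulatS /= IH.
Qed.

Implicit Types (f g h : cochainT R).

Lemma cochain_zero_entry n f s k : cochain n f -> Nseq n s -> (k < n)%N ->
  nth 0 s k = 0 -> f s = 0.
Proof.
move=> Hf Hs Hk H0.
have Es : set_nth 0 s k 0 = s by rewrite -{2}H0 set_nth_same ?Hs.1.
have := Hf k s 0 0 1 Hk Hs inN3_0 inN3_0.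
rewrite scaler0 addr0 mul1r Es.
by move/(congr1 (fun z => z - f s)); rewrite subrr addrK.
Qed.

Lemma cochain_linear_head m f x y s (r : R) : cochain m.+1 f -> Nseq m s ->
  inN3 x -> inN3 y -> f ((r *: x + y) :: s) = r * f (x :: s) + f (y :: s).
Proof. by move=> Hf Hs Hx Hy; apply: (Hf 0%N (x :: s)) => //; apply: Nseq_cons. Qed.

Lemma cochain_zero_head m f s : cochain m.+1 f -> Nseq m s -> f (0 :: s) = 0.
Proof.
move=> Hf Hs; apply: (cochain_zero_entry (k := 0%N) Hf) => //.
exact: Nseq_cons inN3_0 Hs.
Qed.

Lemma cochain_scale_head m f x s (r : R) : cochain m.+1 f -> Nseq m s -> inN3 x ->
  f ((r *: x) :: s) = r * f (x :: s).
Proof.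
move=> Hf Hs Hx.
by rewrite -[r *: x]addr0 (cochain_linear_head _ Hf Hs Hx inN3_0) (cochain_zero_head Hf Hs) addr0.
Qed.

Lemma cochain_head_decomp m f x s : cochain m.+1 f -> Nseq m s -> inN3 x ->
  f (x :: s) = x i0 i0 * f (mI :: s) + x i0 i1 * f (mX :: s)
             + x i0 i2 * f (mZ :: s) + x i1 i2 * f (mY :: s).
Proof.
move=> Hf Hs Hx; have L := cochain_linear_head _ Hf Hs.
have HJ a b c : inN3 (a *: mX + (b *: mZ + c *: mY)).
  by rewrite !inN3_lin ?inN3_scale ?inN3_X ?inN3_Z ?inN3_Y.
rewrite {1}(N3_decomp Hx) L ?inN3_I ?HJ // L ?inN3_X ?inN3_lin ?inN3_scale ?inN3_Z ?inN3_Y //.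
by rewrite L ?inN3_Z ?inN3_scale ?inN3_Y // (cochain_scale_head _ Hf Hs inN3_Y) !addrA.
Qed.

Lemma cochain_zero n : cochain n (fun _ => 0 : R).
Proof. by move=> k s x y r Hk Hs Hx Hy /=; ring. Qed.

Lemma cochain_add n f g : cochain n f -> cochain n g -> cochain n (fun s => f s + g s).
Proof. by move=> Hf Hg k s x y r Hk Hs Hx Hy /=; rewrite Hf // Hg //; ring. Qed.

Lemma cochain_sub n f g : cochain n f -> cochain n g -> cochain n (fun s => f s - g s).
Proof. by move=> Hf Hg k s x y r Hk Hs Hx Hy /=; rewrite Hf // Hg //; ring. Qed.

Lemma cochain_scale n (a : R) f : cochain n f -> cochain n (fun s => a * f s).
Proof. by move=> Hf k s x y r Hk Hs Hx Hy /=; rewrite Hf //; ring. Qed.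

Lemma cochain_sum n (I : Type) (r : seq I) (F : I -> cochainT R) :
  (forall i, cochain n (F i)) -> cochain n (fun s => \sum_(i <- r) F i s).
Proof.
move=> HF; elim: r => [|a r IH] k s x y r0 Hk Hs Hx Hy.
  by rewrite !big_nil; ring.
by rewrite !big_cons HF // IH //; ring.
Qed.

Lemma cochain_cup p q f g : cochain p f -> cochain q g -> cochain (p + q) (cup p f g).
Proof.
move=> Hf Hg k s x y r Hk Hs Hx Hy; rewrite /cup.
have Hks : (k < size s)%N by rewrite Hs.1.
have [Hkp|Hkp] := ltnP k p.
  rewrite !take_set_nth_lt // !drop_set_nth_lt // (Hf k (take p s)) //; first ring.
  by apply: (Nseq_take (n := p + q)) => //; rewrite leq_addr.
rewrite !take_set_nth_ge // !drop_set_nth_ge // (Hg (k - p)%N (drop p s)) //; first ring.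
  by rewrite ltn_subLR.
exact: Nseq_drop.
Qed.

Definition contract (B : M) f : cochainT R := fun s => f (B :: s).

Lemma cochain_contract m B f : inN3 B -> cochain m.+1 f -> cochain m (contract B f).
Proof.
move=> HB Hf k s x y r Hk Hs Hx Hy.
exact: (Hf k.+1 (B :: s) x y r Hk (Nseq_cons HB Hs) Hx Hy).
Qed.

Lemma cochain_functional (e : M -> R) :
  (forall r x y, e (r *: x + y) = r * e x + e y) -> cochain 1 (fun s => e (nth 0 s 0)).
Proof. by move=> He [|k] s x y r Hk Hs Hx Hy //=; rewrite !nth_set_nth /= He. Qed.

Lemma hoch_d_eq n f g s : (forall t, f t = g t) -> hoch_d n f s = hoch_d n g s.
Proof.
move=> Hfg; rewrite /hoch_d !Hfg.
by congr (_ + _ + _); apply: eq_bigr => i _; rewrite Hfg.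
Qed.

Lemma hoch_d_zero n s : hoch_d n (fun _ => 0 : R) s = 0.
Proof. by rewrite /hoch_d big1 => [|i _]; rewrite ?mulr0 ?mul0r ?addr0. Qed.

Lemma hoch_d_add n f g s : hoch_d n (fun t => f t + g t) s = hoch_d n f s + hoch_d n g s.
Proof. by rewrite /hoch_d; under eq_bigr do rewrite mulrDr; rewrite big_split /=; ring. Qed.

Lemma hoch_d_sub n f g s : hoch_d n (fun t => f t - g t) s = hoch_d n f s - hoch_d n g s.
Proof. by rewrite /hoch_d; under eq_bigr do rewrite mulrBr; rewrite sumrB /=; ring. Qed.

Lemma hoch_d_scale n (a : R) f s : hoch_d n (fun t => a * f t) s = a * hoch_d n f s.
Proof. by rewrite /hoch_d; under eq_bigr do rewrite mulrCA; rewrite -mulr_sumr; ring. Qed.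

Lemma hoch_d_sum n (I : Type) (r : seq I) (F : I -> cochainT R) s :
  hoch_d n (fun t => \sum_(i <- r) F i t) s = \sum_(i <- r) hoch_d n (F i) s.
Proof.
elim: r => [|a r IH].
  by rewrite (hoch_d_eq _ _ (fun t => big_nil _ _ _ _)) hoch_d_zero big_nil.
by rewrite big_cons -IH -hoch_d_add; apply: hoch_d_eq => t; rewrite big_cons.
Qed.

Lemma cocycle_scale n (a : R) f : cocycle n f -> cocycle n (fun s => a * f s).
Proof.
move=> [Hf Ef]; split; first exact: cochain_scale.
by move=> s Hs; rewrite hoch_d_scale Ef // mulr0.
Qed.

Lemma cocycle_sum n (I : Type) (r : seq I) (F : I -> cochainT R) :
  (forall i, cocycle n (F i)) -> cocycle n (fun s => \sum_(i <- r) F i s).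
Proof.
move=> HF; split; first by apply: cochain_sum => i; case: (HF i).
by move=> s Hs; rewrite hoch_d_sum big1 // => i _; case: (HF i) => _ ->.
Qed.

Lemma coboundary_ext n f g : (forall s, Nseq n s -> f s = g s) ->
  coboundary n f -> coboundary n g.
Proof.
case: n => [|n] Hfg /=; first by move=> H s Hs; rewrite -Hfg // H.
by case=> h [Hh E]; exists h; split => // s Hs; rewrite -Hfg // E.
Qed.

Lemma coboundary_zero n : coboundary n (fun _ => 0 : R).
Proof.
case: n => [|n] //=; exists (fun _ => 0); split; first exact: cochain_zero.
by move=> s Hs; rewrite hoch_d_zero.
Qed.

Lemma coboundary_add n f g : coboundary n f -> coboundary n g ->
  coboundary n (fun s => f s + g s).
Proof.
case: n => [|n] /=; first by move=> H1 H2 s Hs; rewrite H1 // H2 // addr0.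
case=> h1 [H1 E1] [h2 [H2 E2]]; exists (fun t => h1 t + h2 t); split.
  exact: cochain_add.
by move=> s Hs; rewrite hoch_d_add E1 // E2.
Qed.

Lemma coboundary_scale n (a : R) f : coboundary n f -> coboundary n (fun s => a * f s).
Proof.
case: n => [|n] /=; first by move=> H1 s Hs; rewrite H1 // mulr0.
case=> h1 [H1 E1]; exists (fun t => a * h1 t); split; first exact: cochain_scale.
by move=> s Hs; rewrite hoch_d_scale E1.
Qed.

Lemma coboundary_sum n (I : Type) (r : seq I) (F : I -> cochainT R) :
  (forall i, coboundary n (F i)) -> coboundary n (fun s => \sum_(i <- r) F i s).
Proof.
move=> HF; elim: r => [|a r IH].
  by apply: coboundary_ext (@coboundary_zero n) => s _; rewrite big_nil.
by apply: coboundary_ext (coboundary_add (HF a) IH) => s _; rewrite big_cons.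
Qed.

Lemma leibniz p q f g s : size s = (p + q).+1 ->
  hoch_d (p + q) (cup p f g) s
  = cup p.+1 (hoch_d p f) g s + (-1) ^+ p * cup p f (hoch_d q g) s.
Proof.
move=> Hs; rewrite /hoch_d /cup.
have Hps : (p <= size s)%N by rewrite Hs (leq_trans (leq_addr q p)) // addnC leqnSn.
rewrite big_split_ord /=.
have faces_in_f : \sum_(i < p) (-1) ^+ (lshift q i).+1 *
      (f (take p (mulat (lshift q i) s)) * g (drop p (mulat (lshift q i) s)))
    = (\sum_(i < p) (-1) ^+ i.+1 * f (mulat i (take p.+1 s))) * g (drop p.+1 s).
  rewrite mulr_suml; apply: eq_bigr => i _ /=.
  by rewrite take_mulat_lt // drop_mulat_lt // mulrA.
have faces_in_g : \sum_(i < q) (-1) ^+ (rshift p i).+1 *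
      (f (take p (mulat (rshift p i) s)) * g (drop p (mulat (rshift p i) s)))
    = (-1) ^+ p * (f (take p s) * \sum_(i < q) (-1) ^+ i.+1 * g (mulat i (drop p s))).
  rewrite !mulr_sumr; apply: eq_bigr => i _ /=.
  by rewrite take_mulat_ge // drop_mulat_ge // -addnS exprD; ring.
rewrite faces_in_f faces_in_g (nth_take _ (ltn0Sn p)) (nth_take _ (ltnSn p)).
rewrite (nth_drop p 0 s 0) (nth_drop p 0 s q) addn0 take_takel ?leq_addr //.
have -> : behead (take p.+1 s) = take p (behead s) by rewrite -!drop1 take_drop addn1.
have -> : drop p (behead s) = drop p.+1 s by rewrite -drop1 drop_drop addn1.
have -> : behead (drop p s) = drop p.+1 s by rewrite -drop1 drop_drop add1n.
rewrite take_takel // take_drop addnC -addnS exprD !exprS.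
ring.
Qed.

Lemma sign_sq p : (-1) ^+ p * (-1) ^+ p = 1 :> R.
Proof. by rewrite -expr2 -exprM mulnC exprM sqrrN !expr1n. Qed.

Lemma cocycle_cup p q f g : cocycle p f -> cocycle q g -> cocycle (p + q) (cup p f g).
Proof.
move=> [Hf Ef] [Hg Eg]; split; first exact: cochain_cup.
move=> s Hs; rewrite leibniz ?Hs.1 // /cup Ef ?mul0r; last first.
  by apply: (Nseq_take (n := (p + q).+1)) => //; rewrite ltnS leq_addr.
by rewrite Eg ?mulr0 ?addr0 //; apply: Nseq_drop; rewrite addnS.
Qed.

Lemma coboundary_cup_r p q f g : cocycle p f -> coboundary q g ->
  coboundary (p + q) (cup p f g).
Proof.
move=> [Hf Ef]; case: q => [|q] Hg.
  apply: coboundary_ext (@coboundary_zero _) => s Hs.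
  by rewrite /cup Hg ?mulr0 //; apply: Nseq_drop.
case: Hg => h [Hh Eh]; rewrite addnS /=.
exists (fun s => (-1) ^+ p * cup p f h s); split.
  by apply: cochain_scale; apply: cochain_cup.
move=> s Hs; rewrite hoch_d_scale leibniz ?Hs.1 // /cup Ef ?mul0r ?add0r; last first.
  by apply: (Nseq_take (n := (p + q).+1)) => //; rewrite ltnS leq_addr.
by rewrite Eh ?mulrA ?sign_sq ?mul1r //; apply: Nseq_drop; rewrite addnS.
Qed.

Lemma coboundary_cup_l p q f g : coboundary p f -> cocycle q g ->
  coboundary (p + q) (cup p f g).
Proof.
move=> + [Hg Eg]; case: p => [|p] Hf.
  by apply: coboundary_ext (@coboundary_zero _) => s Hs; rewrite /cup take0 Hf ?mul0r.
case: Hf => h [Hh Eh]; rewrite addSn /=.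
exists (cup p h g); split; first exact: cochain_cup.
move=> s Hs; rewrite leibniz ?Hs.1 // /cup Eg ?mulr0 ?addr0; last first.
  by apply: Nseq_drop; rewrite addnS.
by rewrite Eh //; apply: (Nseq_take (n := (p + q).+1)) => //; rewrite ltnS leq_addr.
Qed.

Lemma cup_assoc p q f g h s : cup (p + q) (cup p f g) h s = cup p f (cup q g h) s.
Proof.
by rewrite /cup take_takel ?leq_addr // take_drop drop_drop (addnC q p) mulrA.
Qed.

(* Degree one: alpha and beta are cocycles, and the cochain gamma (the (1,3)
   entry of the first argument) satisfies  d gamma = - alpha u beta, so that
   alpha beta = 0 in cohomology. *)

Definition gammaC : cochainT R := fun s => (nth 0 s 0) i0 i2.

Lemma cochain_gamma : cochain 1 gammaC.
Proof. by apply: (cochain_functional (e := fun x : M => x i0 i2)) => r x y; rewrite !mxE. Qed.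

Lemma Nseq2 s : Nseq 2 s -> exists x y, [/\ s = [:: x; y], inN3 x & inN3 y].
Proof.
case/Nseq_cons_inv=> x [t [-> Hx /Nseq_cons_inv [y [u [-> Hy [Hu _]]]]]].
by exists x, y; rewrite (size0nil Hu).
Qed.

Lemma hoch_d1 f x y :
  hoch_d 1 f [:: x; y] = diagN x * f [:: y] - f [:: x *m y] + f [:: x] * diagN y.
Proof.
by rewrite /hoch_d big_ord_recl big_ord0 /mulat /= addr0 expr1 expr2 mulrNN !mul1r mulN1r.
Qed.

Lemma cocycle_alpha : cocycle 1 (@alphaC R).
Proof.
split; first by apply: (cochain_functional (e := fun x : M => x i0 i1)) => r x y; rewrite !mxE.
move=> s /Nseq2 [x [y [-> /inN3P [h1 h2 h3 h4 h5] /inN3P [g1 g2 g3 g4 g5]]]].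
by rewrite hoch_d1 /alphaC /diagN /= mul3E ?h1 ?h2 ?h3 ?h4 ?h5 ?g1 ?g2 ?g3 ?g4 ?g5; ring.
Qed.

Lemma cocycle_beta : cocycle 1 (@betaC R).
Proof.
split; first by apply: (cochain_functional (e := fun x : M => x i1 i2)) => r x y; rewrite !mxE.
move=> s /Nseq2 [x [y [-> /inN3P [h1 h2 h3 h4 h5] /inN3P [g1 g2 g3 g4 g5]]]].
by rewrite hoch_d1 /betaC /diagN /= mul3E ?h1 ?h2 ?h3 ?h4 ?h5 ?g1 ?g2 ?g3 ?g4 ?g5; ring.
Qed.

Lemma hoch_d_gamma s : Nseq 2 s -> hoch_d 1 gammaC s = - cup 1 (@alphaC R) (@betaC R) s.
Proof.
move=> /Nseq2 [x [y [-> /inN3P [h1 h2 h3 h4 h5] /inN3P [g1 g2 g3 g4 g5]]]].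
rewrite hoch_d1 /cup /alphaC /betaC /gammaC /diagN /= mul3E.
by rewrite ?h1 ?h2 ?h3 ?h4 ?h5 ?g1 ?g2 ?g3 ?g4 ?g5; ring.
Qed.

Lemma coboundary_alpha_beta : coboundary 2 (cup 1 (@alphaC R) (@betaC R)).
Proof.
exists (fun s => (-1) * gammaC s); split; first exact: cochain_scale cochain_gamma.
by move=> s Hs; rewrite hoch_d_scale hoch_d_gamma // mulN1r opprK.
Qed.

Lemma cup1_cons F G x t : cup 1 F G (x :: t) = F [:: x] * G t.
Proof. by rewrite /cup /= take0 drop0. Qed.

Lemma cocycle_letter b : cocycle 1 (@letterC R b).
Proof. by case: b; [exact: cocycle_alpha | exact: cocycle_beta]. Qed.

Lemma cocycle_word (w : seq bool) : cocycle (size w) (@wordC R w).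
Proof.
elim: w => [|b w IH]; last exact: cocycle_cup (cocycle_letter b) IH.
by split=> [k s x y r | s Hs] //; rewrite /hoch_d big_ord0 /one_cochain /=; ring.
Qed.

Lemma cocycle_PhiC m (c : m.-tuple bool -> R) : cocycle m (PhiC c).
Proof.
apply: cocycle_sum => w; apply: cocycle_scale.
by have := cocycle_word w; rewrite size_tuple.
Qed.

Lemma coboundary_word_infix (w : seq bool) :
  infix [:: true; false] w -> coboundary (size w) (@wordC R w).
Proof.
elim: w => [|b w IH] //; rewrite infix_consl => /orP [Hp|Hi].
  case: b Hp => //; case: w {IH} => [|[] v] //= _.
  apply: coboundary_ext (coboundary_cup_l coboundary_alpha_beta (cocycle_word v)) => s _.
  exact: (cup_assoc 1 1).
exact: (coboundary_cup_r (cocycle_letter b) (IH Hi)).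
Qed.

Lemma coboundary_PhiC_ideal m (c : m.-tuple bool -> R) :
  in_ideal_ab c -> coboundary m (PhiC c).
Proof.
move=> Hc; apply: coboundary_sum => w.
have [Hw|Hw] := eqVneq (c w) 0.
  by apply: coboundary_ext (@coboundary_zero _) => s _; rewrite Hw mul0r.
by apply: coboundary_scale; have := coboundary_word_infix (Hc w Hw); rewrite size_tuple.
Qed.

(* Detecting classes: the test sequence (Y,...,Y,X,...,X) with i copies of Y
   and j copies of X. All its consecutive products and all its diagonal
   entries vanish, so every coboundary vanishes on it, while the word
   beta^i' alpha^j' evaluates on it to 1 if (i',j') = (i,j) and to 0 otherwise. *)

Definition test_seq i j : seq M := nseq i mY ++ nseq j mX.

Lemma Nseq_test_seq i j : Nseq (i + j) (test_seq i j).
Proof.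
split; first by rewrite size_cat !size_nseq.
by rewrite all_cat !all_nseq inN3_X inN3_Y !orbT.
Qed.

Lemma test_seq_consY i j : test_seq i.+1 j = mY :: test_seq i j.
Proof. by []. Qed.

Lemma nth_test_seq i j k :
  nth 0 (test_seq i j) k = if (k < i)%N then mY else if (k < i + j)%N then mX else 0.
Proof.
rewrite nth_cat size_nseq; case: ltnP => Hk; first by rewrite nth_nseq Hk.
by rewrite nth_nseq ltn_subLR.
Qed.

Lemma test_seq_products i j k :
  nth 0 (test_seq i j) k *m nth 0 (test_seq i j) k.+1 = 0.
Proof.
rewrite !nth_test_seq; have [Hki|Hik] := ltnP k i.
  by case: ifP => _; [exact: mulYY | case: ifP => _; [exact: mulYX | rewrite mulmx0]].
have -> : (k.+1 < i)%N = false by apply/negbTE; rewrite -leqNgt (leq_trans Hik).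
by case: ifP => _; [case: ifP => _; [exact: mulXX | rewrite mulmx0] | rewrite mul0mx].
Qed.

Lemma test_seq_diag i j k : diagN (nth 0 (test_seq i j) k) = 0.
Proof. by rewrite /diagN nth_test_seq; case: ifP => _; [|case: ifP => _]; rewrite mxE. Qed.

Lemma coboundary_test_seq n F i j : coboundary n F -> (i + j)%N = n -> F (test_seq i j) = 0.
Proof.
case: n => [|n] HF Hij; first by apply: HF; rewrite -Hij; apply: Nseq_test_seq.
case: HF => h [Hh ->]; last by rewrite -Hij; apply: Nseq_test_seq.
have Ht := Nseq_test_seq i j; rewrite Hij in Ht.
rewrite /hoch_d !test_seq_diag big1 => [|k _]; first by rewrite !mul0r mulr0 !addr0.
rewrite (cochain_zero_entry (k := k) Hh) ?mulr0 //; first exact: Nseq_mulat.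
by rewrite nth_mulat ?test_seq_products // Ht.1 ltnW // ltnS ltnW.
Qed.

Lemma wordC_test_seq (w : seq bool) i j : size w = (i + j)%N ->
  wordC w (test_seq i j) = (w == ba_word i j)%:R.
Proof.
have letterY b : @letterC R b [:: mY] = (~~ b)%:R.
  by case: b; rewrite /letterC /alphaC /betaC /= mxE.
have letterX b : @letterC R b [:: mX] = b%:R.
  by case: b; rewrite /letterC /alphaC /betaC /= mxE.
have consX j' : test_seq 0 j'.+1 = mX :: test_seq 0 j' by [].
have wordC_cons b' w' : wordC (b' :: w') = cup 1 (letterC b') (wordC w') by [].
elim: w i j => [|b w IH] [|i] [|j] // [Hs];
  rewrite ?consX ?test_seq_consY wordC_cons cup1_cons ?letterX ?letterY IH //;
  rewrite /ba_word /= eqseq_cons;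
  by case: b; rewrite ?mul1r ?mul0r.
Qed.

Lemma PhiC_test_seq m (c : m.-tuple bool -> R) i j (w : m.-tuple bool) :
  tval w = ba_word i j -> (i + j)%N = m -> PhiC c (test_seq i j) = c w.
Proof.
move=> Hw Hij; rewrite /PhiC (bigD1 w) //= wordC_test_seq ?size_tuple // Hw eqxx mulr1.
rewrite big1 ?addr0 // => w' Hw'.
by rewrite wordC_test_seq ?size_tuple // -Hw val_eqE (negbTE Hw') mulr0.
Qed.

Lemma noinfix_ba_word (w : seq bool) :
  ~~ infix [:: true; false] w -> exists i j, w = ba_word i j.
Proof.
elim: w => [|b w IH]; first by exists 0%N, 0%N.
rewrite infix_consl negb_or => /andP [Hp /IH [i [j Ew]]]; subst w; clear IH.
case: b Hp => Hp; last by exists i.+1, j.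
case: i Hp => [|i] Hp; first by exists 0%N, j.+1.
by move: Hp; rewrite /ba_word /=; case: (_ ++ _).
Qed.

Lemma size_ba_word i j : size (ba_word i j) = (i + j)%N.
Proof. by rewrite size_cat !size_nseq. Qed.

Lemma ideal_of_test_seq m (c : m.-tuple bool -> R) :
  (forall i j, (i + j)%N = m -> PhiC c (test_seq i j) = 0) -> in_ideal_ab c.
Proof.
move=> H0 w Hw; apply/negPn/negP => /noinfix_ba_word [i [j E]].
have Hij : (i + j)%N = m by rewrite -(size_tuple w) E size_ba_word.
by move: Hw; rewrite -(PhiC_test_seq c E Hij) H0 ?eqxx.
Qed.

Lemma ideal_of_coboundary m (c : m.-tuple bool -> R) :
  coboundary m (PhiC c) -> in_ideal_ab c.
Proof. by move=> H; apply: ideal_of_test_seq => i j; apply: coboundary_test_seq. Qed.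

(* A cocycle f of degree m+1 is
   expanded along its first argument x = aI + bX + cZ + dY:
     f = d(contract I f) + alpha u A + gamma u K + beta u B
   with A, K, B the contractions of f with X, Z, Y. Here K and B are cocycles,
   and d A = - beta u K; since beta u - is injective on H^m, K is a
   coboundary, which lets us absorb gamma u K into alpha u A. *)

Lemma hoch_d_contract m f x s : cocycle m.+1 f -> inN3 x -> Nseq m.+1 s ->
  hoch_d m (contract x f) s = diagN x * f s - f ((x *m nth 0 s 0) :: behead s)
                            + diagN (nth 0 s 0) * f (x :: behead s).
Proof.
move=> [_ Ef] Hx Hs; have := Ef (x :: s) (Nseq_cons Hx Hs).
have -> : hoch_d m.+1 f (x :: s) = diagN x * f s - f ((x *m nth 0 s 0) :: behead s)
    + diagN (nth 0 s 0) * f (x :: behead s) - hoch_d m (contract x f) s.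
  rewrite /hoch_d big_ord_recl /contract /=.
  have -> : mulat 0 (x :: s) = (x *m nth 0 s 0) :: behead s by rewrite /mulat /= drop1.
  rewrite (eq_bigr (fun i : 'I_m => - ((-1) ^+ i.+1 * f (x :: mulat i s)))); last first.
    by move=> i _; rewrite /bump /= mulatS exprS mulN1r mulNr.
  by rewrite sumrN expr1 (exprS _ m.+1) mulN1r; ring.
by move=> H0; rewrite -[LHS]add0r -H0; ring.
Qed.

Lemma cocycle_contract_absorbing m f B : inN3 B -> diagN B = 0 ->
  (forall y, inN3 y -> B *m y = diagN y *: B) ->
  cocycle m.+1 f -> cocycle m (contract B f).
Proof.
move=> HB HB0 HBy Hf; split; first exact: cochain_contract Hf.1.
move=> s Hs; rewrite hoch_d_contract //.
have [y [t [-> Hy Ht]]] := Nseq_cons_inv Hs.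
by rewrite /= HBy // (cochain_scale_head _ Hf.1 Ht HB) HB0; ring.
Qed.

Lemma diagN_X : diagN mX = 0. Proof. by rewrite /diagN mxE. Qed.
Lemma diagN_Z : diagN mZ = 0. Proof. by rewrite /diagN mxE. Qed.
Lemma diagN_Y : diagN mY = 0. Proof. by rewrite /diagN mxE. Qed.

Section HeadExpansion.
Variables (m : nat) (f : cochainT R).
Hypothesis f_cocycle : cocycle m.+1 f.

Let A := contract mX f.
Let K := contract mZ f.
Let B := contract mY f.

Lemma cocycle_contract_Z : cocycle m K.
Proof. exact: cocycle_contract_absorbing inN3_Z diagN_Z (@mulZN) f_cocycle. Qed.

Lemma cocycle_contract_Y : cocycle m B.
Proof. exact: cocycle_contract_absorbing inN3_Y diagN_Y (@mulYN) f_cocycle. Qed.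

(* From XN = a X + d Z: the differential of A is - beta u K. *)
Lemma hoch_d_contract_X s : Nseq m.+1 s -> hoch_d m A s = - cup 1 (@betaC R) K s.
Proof.
move=> Hs; have Hf := f_cocycle.1; rewrite /A hoch_d_contract ?inN3_X // diagN_X.
have [x [t [-> Hx Ht]]] := Nseq_cons_inv Hs.
rewrite /= mulXN // (cochain_linear_head _ Hf Ht inN3_X) ?inN3_scale ?inN3_Z //.
by rewrite (cochain_scale_head _ Hf Ht inN3_Z) cup1_cons /K /contract /betaC /diagN /=; ring.
Qed.

Lemma head_expansion s : Nseq m.+1 s ->
  f s = hoch_d m (contract mI f) s + cup 1 (@alphaC R) A s
        + cup 1 gammaC K s + cup 1 (@betaC R) B s.
Proof.
move=> Hs; rewrite hoch_d_contract ?inN3_I //.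
have [x [t [-> Hx Ht]]] := Nseq_cons_inv Hs.
rewrite /= mul1mx (cochain_head_decomp f_cocycle.1 Ht Hx) !cup1_cons.
by rewrite /A /K /B /contract /diagN /alphaC /betaC /gammaC !mxE /=; ring.
Qed.

Lemma coboundary_beta_contract_Z : coboundary m.+1 (cup 1 (@betaC R) K).
Proof.
exists (fun s => (-1) * A s); split.
  exact: cochain_scale (cochain_contract inN3_X f_cocycle.1).
by move=> s Hs; rewrite hoch_d_scale hoch_d_contract_X // mulN1r opprK.
Qed.

End HeadExpansion.

Definition Phi_onto (m : nat) : Prop := forall f, cocycle m f ->
  exists c : m.-tuple bool -> R, coboundary m (fun s => f s - PhiC c s).

(* If Phi is onto in degree m, then left multiplication by beta is injective
   on H^m: a cocycle K with beta u K exact is itself exact. Indeed K ~ Phi c,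
   and beta u Phi c vanishing on the test sequences (Y, Y^i X^j) forces c
   into the ideal (alpha beta). *)
Lemma beta_cup_injective m K : Phi_onto m -> cocycle m K ->
  coboundary m.+1 (cup 1 (@betaC R) K) -> coboundary m K.
Proof.
move=> onto HK HbK; have [c Hc] := onto K HK.
suff /coboundary_PhiC_ideal Hid : in_ideal_ab c.
  by apply: coboundary_ext (coboundary_add Hc Hid) => s _; ring.
have HbPhi := coboundary_add HbK (coboundary_scale (-1) (coboundary_cup_r cocycle_beta Hc)).
apply: ideal_of_test_seq => i j Hij.
have := coboundary_test_seq HbPhi (i := i.+1) (j := j); rewrite addSn Hij => /(_ erefl).
have beta_Y : betaC [:: mY] = 1 :> R by rewrite /betaC mxE.
by rewrite test_seq_consY !cup1_cons beta_Y => <-; ring.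
Qed.

Lemma hoch_d_cup_cocycle1 n e h s : cocycle 1 e -> Nseq n.+2 s ->
  hoch_d n.+1 (cup 1 e h) s = - cup 1 e (hoch_d n h) s.
Proof.
move=> [_ Ee] Hs; rewrite (leibniz (p := 1) (q := n)) ?Hs.1 // {1}/cup.
rewrite Ee ?mul0r ?add0r ?expr1 ?mulN1r //.
exact: (Nseq_take (n := n.+2)).
Qed.

Lemma hoch_d_gamma_cup n h s : Nseq n.+2 s -> hoch_d n.+1 (cup 1 gammaC h) s
  = - cup 1 (@alphaC R) (cup 1 (@betaC R) h) s - cup 1 gammaC (hoch_d n h) s.
Proof.
move=> Hs; rewrite (leibniz (p := 1) (q := n)) ?Hs.1 // -(cup_assoc 1 1) {1}/cup.
by rewrite hoch_d_gamma; [rewrite /cup; ring | exact: (Nseq_take (n := n.+2))].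
Qed.

(* Given the head expansion of f with an exact K, the term gamma u K can be
   absorbed: f is cohomologous to alpha u A' + beta u B for a cocycle A'
   (A' = A - beta u h and the primitive changes by gamma u h, where K = d h). *)
Lemma absorb_gamma_part m f A G B K : cochain m A -> cochain m G -> coboundary m K ->
  (forall s, Nseq m.+1 s -> hoch_d m A s = - cup 1 (@betaC R) K s) ->
  (forall s, Nseq m.+1 s -> f s = hoch_d m G s + cup 1 (@alphaC R) A s
                                  + cup 1 gammaC K s + cup 1 (@betaC R) B s) ->
  exists A', cocycle m A' /\
    coboundary m.+1 (fun s => f s - (cup 1 (@alphaC R) A' s + cup 1 (@betaC R) B s)).
Proof.
case: m A G K => [|n] A G K HA HG HK dA Hexp.
  exists A; split.
    split=> // s Hs; rewrite dA //; have [x [t [-> _ Ht]]] := Nseq_cons_inv Hs.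
    by rewrite cup1_cons (HK t Ht) mulr0 oppr0.
  exists G; split=> // s Hs; rewrite Hexp //; have [x [t [-> _ Ht]]] := Nseq_cons_inv Hs.
  by rewrite !cup1_cons (HK t Ht); ring.
case: HK => h [Hh Eh].
have Kdh e s : Nseq n.+2 s -> cup 1 e K s = cup 1 e (hoch_d n h) s.
  by move=> Hs; rewrite /cup Eh //; apply: (Nseq_drop (p := 1)).
exists (fun s => A s - cup 1 (@betaC R) h s); split.
  split; first exact: cochain_sub HA (cochain_cup cocycle_beta.1 Hh).
  move=> s Hs; rewrite hoch_d_sub dA // (hoch_d_cup_cocycle1 _ cocycle_beta Hs) Kdh //.
  by rewrite opprK addNr.
exists (fun s => G s - cup 1 gammaC h s); split.
  exact: cochain_sub HG (cochain_cup cochain_gamma Hh).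
move=> s Hs; rewrite hoch_d_sub hoch_d_gamma_cup // Hexp // Kdh // /cup; ring.
Qed.

Definition glue_coef m (cA cB : m.-tuple bool -> R) (w : m.+1.-tuple bool) : R :=
  if thead w then cA [tuple of behead w] else cB [tuple of behead w].

Lemma PhiC_glue m (cA cB : m.-tuple bool -> R) s :
  PhiC (glue_coef cA cB) s = cup 1 (@alphaC R) (PhiC cA) s + cup 1 (@betaC R) (PhiC cB) s.
Proof.
have behead_cons b (w : m.-tuple bool) : [tuple of behead [tuple of b :: w]] = w.
  exact: val_inj.
rewrite /PhiC /cup (reindex (fun p : bool * m.-tuple bool => [tuple of p.1 :: p.2])) /=.
  rewrite -(pair_big xpredT xpredT (fun b (w : m.-tuple bool) =>
    glue_coef cA cB [tuple of b :: w] * wordC [tuple of b :: w] s)) /=.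
  rewrite big_bool /= !mulr_sumr; congr (_ + _); apply: eq_bigr => w _;
    by rewrite /glue_coef /= behead_cons mulrCA.
apply: onW_bij; exists (fun w : m.+1.-tuple bool => (thead w, [tuple of behead w])).
- by case=> b w; rewrite theadE; congr pair; apply: val_inj.
- by move=> w; rewrite [RHS]tuple_eta.
Qed.

Lemma Phi_onto_step m : Phi_onto m -> Phi_onto m.+1.
Proof.
move=> onto f Hf.
have HK : coboundary m (contract mZ f) := beta_cup_injective onto
  (cocycle_contract_Z Hf) (coboundary_beta_contract_Z Hf).
have [A' [HA' Hf']] := absorb_gamma_part (cochain_contract inN3_X Hf.1)
  (cochain_contract inN3_I Hf.1) HK (hoch_d_contract_X Hf) (head_expansion Hf).
have [cA HcA] := onto A' HA'.
have [cB HcB] := onto _ (cocycle_contract_Y Hf).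
exists (glue_coef cA cB).
have HcAB := coboundary_add (coboundary_cup_r cocycle_alpha HcA)
                            (coboundary_cup_r cocycle_beta HcB).
by apply: coboundary_ext (coboundary_add Hf' HcAB) => s _; rewrite PhiC_glue /cup; ring.
Qed.

Lemma Phi_onto0 : Phi_onto 0.
Proof.
move=> f Hf; exists (fun _ => f [::]) => s [/size0nil -> _].
rewrite /PhiC (bigD1 [tuple]) //= big1 => [|w]; last by rewrite (tuple0 w) => /negP[].
by rewrite addr0 /one_cochain mulr1 subrr.
Qed.

Lemma Phi_onto_all m : Phi_onto m.
Proof. by elim: m => [|m IH]; [exact: Phi_onto0 | exact: Phi_onto_step]. Qed.

(* The basis beta^i alpha^(m-i) of H^m. Words avoiding alpha beta are exactly
   the ba_word i (m - i), indexed by i < m+1 through their number of betas. *)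

Definition ba_tuple m (i : 'I_m.+1) : m.-tuple bool :=
  @Tuple m bool (ba_word i (m - i))
    (introT eqP (etrans (size_ba_word _ _) (subnKC (ltnSE (ltn_ord i))))).

Lemma count_ba_word i j : count negb (ba_word i j) = i.
Proof. by rewrite count_cat !count_nseq /= mul1n mul0n addn0. Qed.

Lemma ba_word_noinfix i j : ~~ infix [:: true; false] (ba_word i j).
Proof.
elim: i => [|i IH].
  by elim: j => [|j IH] //; rewrite [ba_word _ _]/= infix_consl negb_or IH andbT; case: j {IH}.
by rewrite [ba_word _ _]/= infix_consl negb_or IH.
Qed.

Lemma sum_noinfix m (G : m.-tuple bool -> R) :
  \sum_(w : m.-tuple bool | ~~ infix [:: true; false] w) G w = \sum_(i < m.+1) G (ba_tuple i).
Proof.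
rewrite (reindex (@ba_tuple m)) /=; first by apply: eq_bigl => i; rewrite ba_word_noinfix.
exists (fun w : m.-tuple bool => inord (count negb w)).
  by move=> i _; apply: val_inj; rewrite /= count_ba_word inordK.
move=> w; rewrite inE => /noinfix_ba_word [a [b E]].
have Hab : (a + b)%N = m by rewrite -(size_tuple w) E size_ba_word.
apply: val_inj; rewrite /= E count_ba_word inordK; last by rewrite ltnS -Hab leq_addr.
by rewrite -Hab addKn.
Qed.

Lemma PhiC_basis_split m (c : m.-tuple bool -> R) s :
  PhiC c s = PhiC (fun w => if infix [:: true; false] w then c w else 0) s
           + \sum_(i < m.+1) c (ba_tuple i) * wordC (ba_word i (m - i)) s.
Proof.
rewrite -(sum_noinfix (fun w => c w * wordC w s)) /PhiC [X in _ + X]big_mkcond -big_split.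
by apply: eq_bigr => w _; case: ifP => _ /=; ring.
Qed.

Lemma basis_spans m f : cocycle m f -> exists c : 'I_m.+1 -> R,
  coboundary m (fun s => f s - \sum_(i < m.+1) c i * wordC (ba_word i (m - i)) s).
Proof.
move=> Hf; have [c0 Hc0] := Phi_onto_all Hf; exists (fun i => c0 (ba_tuple i)).
have Hid : in_ideal_ab (fun w : m.-tuple bool => if infix [:: true; false] w then c0 w else 0).
  by move=> w; case: ifP => // _; rewrite eqxx.
apply: coboundary_ext (coboundary_add Hc0 (coboundary_PhiC_ideal Hid)) => s _ /=.
by rewrite (PhiC_basis_split c0 s); ring.
Qed.

(* Independence: evaluate on the test sequence (Y^k, X^(m-k)). *)
Lemma basis_independent m (c : 'I_m.+1 -> R) :
  coboundary m (fun s => \sum_(i < m.+1) c i * wordC (ba_word i (m - i)) s) ->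
  forall k, c k = 0.
Proof.
move=> H k; have Hk : (k + (m - k))%N = m by rewrite subnKC // -ltnS.
have wordC_basis (i : 'I_m.+1) : wordC (ba_word i (m - i)) (test_seq k (m - k)) = (i == k)%:R.
  rewrite wordC_test_seq; last by rewrite size_ba_word !subnKC // -ltnS.
  suff -> : (ba_word i (m - i) == ba_word k (m - k)) = (i == k) by [].
  apply/eqP/eqP => [E|-> //]; apply: val_inj.
  by rewrite /= -(count_ba_word i (m - i)) E count_ba_word.
have := coboundary_test_seq H Hk; rewrite (bigD1 k) //= big1 => [|i Hi].
  by rewrite wordC_basis eqxx mulr1 addr0.
by rewrite wordC_basis (negbTE Hi) mulr0.
Qed.

End N3Cohomology.

Theorem lemma5p3 (R : comPzRingType) :
  (* H^*(N,T) with the cup product is a graded associative R-algebra *)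
  ((forall (p q : nat) (f g : cochainT R),
      cocycle p f -> cocycle q g -> cocycle (p + q) (cup p f g)) /\
   (forall (p q : nat) (f g : cochainT R),
      cocycle p f -> cocycle q g -> coboundary q g -> coboundary (p + q) (cup p f g)) /\
   (forall (p q : nat) (f g : cochainT R),
      cocycle p f -> coboundary p f -> cocycle q g -> coboundary (p + q) (cup p f g)) /\
   (forall (p q : nat) (f g h : cochainT R) (s : seq 'M[R]_3),
      cup (p + q) (cup p f g) h s = cup p f (cup q g h) s) /\
   cocycle 1 (@alphaC R) /\ cocycle 1 (@betaC R)) /\
  (* R<alpha,beta>/(alpha beta) -> H^*(N,T) is an isomorphism in every degree m *)
  (forall (m : nat),
     (forall c : m.-tuple bool -> R, cocycle m (PhiC c)) /\
     (forall f : cochainT R, cocycle m f ->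
        exists c : m.-tuple bool -> R, coboundary m (fun s => f s - PhiC c s)) /\
     (forall c : m.-tuple bool -> R, coboundary m (PhiC c) <-> in_ideal_ab c)) /\
  (* in particular H^m is free with basis beta^i alpha^j, i + j = m *)
  (forall (m : nat),
     (forall f : cochainT R, cocycle m f ->
        exists c : 'I_m.+1 -> R,
          coboundary m (fun s => f s - \sum_(i < m.+1) c i * wordC (ba_word i (m - i)) s)) /\
     (forall c : 'I_m.+1 -> R,
        coboundary m (fun s => \sum_(i < m.+1) c i * wordC (ba_word i (m - i)) s) ->
        forall i, c i = 0)).
Proof.
split; first split.
- by move=> p q f g; apply: cocycle_cup.
- split; first by move=> p q f g Hf _; apply: coboundary_cup_r.
  split; first by move=> p q f g _; apply: coboundary_cup_l.
  split; first exact: cup_assoc.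
  exact: (conj (@cocycle_alpha R) (@cocycle_beta R)).
split=> m.
- split; first exact: cocycle_PhiC.
  split; first exact: Phi_onto_all.
  by move=> c; split; [apply: ideal_of_coboundary | apply: coboundary_PhiC_ideal].
- by split; [apply: basis_spans | apply: basis_independent].
Qed.
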